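(* Let $K$ be a commutative unital ring and let $A\in M_n(K)$ be block triangular with associated partition $A=(A_{ij})_{i,j=1}^q$. If $\lambda\in K$ is an eigenvalue of $A$, then $\lambda$ is an eigenvalue of $A_{ii}$ for some $1\le i\le q$.
   Context: $A$ is block lower triangular if there is a partition $A=(A_{ij})_{i,j=1}^q$, $q>1$, with square diagonal blocks $A_{ii}$ and $A_{ij}=0$ for $i<j$; block upper triangular if $A^T$ is block lower triangular (with the transposed partition); block triangular if either. $\lambda\in K$ is an eigenvalue of a square matrix $B$ if $Bv=\lambda v$ for some nonzero column vector $v$ over $K$; equivalently, $\det(\lambda I-B)$ is a zero divisor of $K$ (an element $u$ with $uw=0$ for some $w\ne0$). *)

From HB Require Import structures.
From mathcomp Require Import all_boot all_order all_algebra.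
Set Implicit Arguments. Unset Strict Implicit. Unset Printing Implicit Defensive.
Import GRing.Theory.
Local Open Scope ring_scope.

Definition is_eigenvalue (K : comPzRingType) (m : nat) (B : 'M[K]_m) (lam : K) : Prop :=
  exists v : 'cV[K]_m, v != 0 /\ B *m v = lam *: v.

(* A square matrix of size \sum_i p i, partitioned into q x q blocks
   A_ij := submxblock A i j of size p i x p j (contiguous, in order). *)
Definition block_lower (K : comPzRingType) (q : nat) (p : 'I_q -> nat)
  (A : 'M[K]_(\sum_(i < q) p i)) : Prop :=
  forall i j : 'I_q, (i < j)%N -> submxblock A i j = 0.

Definition block_upper (K : comPzRingType) (q : nat) (p : 'I_q -> nat)
  (A : 'M[K]_(\sum_(i < q) p i)) : Prop := block_lower (A^T).

Definition block_triangular (K : comPzRingType) (q : nat) (p : 'I_q -> nat)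
  (A : 'M[K]_(\sum_(i < q) p i)) : Prop := block_lower A \/ block_upper A.

From HB Require Import structures.
From mathcomp Require Import all_boot all_order all_algebra.
Import GRing.Theory.
Local Open Scope ring_scope.

(* Split an eigenvector v of A (A v = lam v, v != 0) into its
   blocks v_1, ..., v_q along the partition; some block is nonzero.  Row
   block i of the equation reads  \sum_j A_ij v_j = lam v_i.
   - If A is block lower triangular, take i minimal with v_i != 0: the terms
     with j > i vanish because A_ij = 0, those with j < i because v_j = 0.
   - If A is block upper triangular, take i maximal with v_i != 0 instead. *)

Section BlockEigen.

Variables (K : comPzRingType) (q : nat) (p : 'I_q -> nat).
Notation n := (\sum_(i < q) p i).

Lemma submxcol_mulmx (A : 'M[K]_n) (v : 'cV[K]_n) (i : 'I_q) :
  submxcol (A *m v) i = \sum_j submxblock A i j *m submxcol v j.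
Proof.
rewrite -[A]submxblockK -[v]submxcolK mul_mxblock_mxrow mxcolK.
by apply: eq_bigr => j _; rewrite submxblockK submxcolK.
Qed.

Lemma submxcolZ (v : 'cV[K]_n) (lam : K) (i : 'I_q) :
  submxcol (lam *: v) i = lam *: submxcol v i.
Proof. by apply/matrixP => a b; rewrite !mxE. Qed.

Lemma submxcol_neq0 {v : 'cV[K]_n} : v != 0 -> exists i, submxcol v i != 0.
Proof.
move=> v_neq0; apply/existsP; apply: contraNT v_neq0.
rewrite negb_exists => /forallP v_blocks0; apply/eqP.
rewrite -[v]submxcolK -(mxcol0 (p_ := p) 1).
by apply: eq_mxcol => i; apply/eqP; rewrite -[_ == 0]negbK v_blocks0.
Qed.

Lemma eigenvalue_diag_block {A : 'M[K]_n} {v : 'cV[K]_n} {lam : K} {i : 'I_q} :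
  A *m v = lam *: v -> submxcol v i != 0 ->
  (forall j, j != i -> submxblock A i j *m submxcol v j = 0) ->
  is_eigenvalue (submxblock A i i) lam.
Proof.
move=> Av vi_neq0 off_diag0; exists (submxcol v i); split => //.
rewrite -submxcolZ -Av submxcol_mulmx (bigD1 i) //=.
by rewrite big1 ?addr0 // => j /off_diag0.
Qed.

(* Lower case: use the first nonzero block of the eigenvector. *)
Lemma block_lower_eigenvalue (A : 'M[K]_n) (lam : K) :
  block_lower A -> is_eigenvalue A lam ->
  exists i : 'I_q, is_eigenvalue (submxblock A i i) lam.
Proof.
move=> A_lower [v [v_neq0 Av]].
have [i0 vi0_neq0] := submxcol_neq0 v_neq0.
have [i vi_neq0 i_min] := @arg_minnP _ i0 (fun j => submxcol v j != 0) val vi0_neq0.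
exists i; apply: (eigenvalue_diag_block Av vi_neq0) => j j_neq_i.
have [i_lt_j | j_lt_i | /val_inj i_eq_j] := ltngtP i j.
- by rewrite A_lower // mul0mx.
- have /eqP -> : submxcol v j == 0.
    by apply: contraTT j_lt_i => /i_min; rewrite leqNgt.
  by rewrite mulmx0.
- by rewrite i_eq_j eqxx in j_neq_i.
Qed.

(* Upper case: use the last nonzero block of the eigenvector. *)
Lemma block_upper_eigenvalue (A : 'M[K]_n) (lam : K) :
  block_upper A -> is_eigenvalue A lam ->
  exists i : 'I_q, is_eigenvalue (submxblock A i i) lam.
Proof.
move=> A_upper [v [v_neq0 Av]].
have [i0 vi0_neq0] := submxcol_neq0 v_neq0.
have [i vi_neq0 i_max] := @arg_maxnP _ i0 (fun j => submxcol v j != 0) val vi0_neq0.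
exists i; apply: (eigenvalue_diag_block Av vi_neq0) => j j_neq_i.
have [i_lt_j | j_lt_i | /val_inj i_eq_j] := ltngtP i j.
- have /eqP -> : submxcol v j == 0.
    by apply: contraTT i_lt_j => /i_max; rewrite ltnNge negbK.
  by rewrite mulmx0.
- have /eqP := A_upper _ _ j_lt_i.
  by rewrite -tr_submxblock trmx_eq0 => /eqP ->; rewrite mul0mx.
- by rewrite i_eq_j eqxx in j_neq_i.
Qed.

End BlockEigen.

Theorem lemma2p3 (K : comPzRingType) (q : nat) (p : 'I_q -> nat)
  (hq : (1 < q)%N) (hp : forall i, (0 < p i)%N)
  (A : 'M[K]_(\sum_(i < q) p i)) (lam : K) :
  block_triangular A -> is_eigenvalue A lam ->
  exists i : 'I_q, is_eigenvalue (submxblock A i i) lam.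
Proof.
by case=> [A_lower | A_upper];
  [exact: block_lower_eigenvalue | exact: block_upper_eigenvalue].
Qed.
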